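(* With $z^3=t(1-t)^2$, one has \[ \sum_{i\ge0}(\tau_i-t\tau_{i-1})w^i=\frac{w(1-tw)}{1-2w+w^2-z^3w^3}=\frac{w}{1-(2-t)w+(1-t)^2w^2}, \] (with $\tau_{-1}=0$), and hence, for all $i\ge0$, \[ \tau_i-t\tau_{i-1}=\frac{\mu_3^i-\mu_2^i}{\mu_3-\mu_2},\qquad \mu_{2,3}=\frac{2-t\mp W}{2},\ W=\sqrt{4t-3t^2}. \] Consequently, for every fixed $i\ge1$, $\lim_{n\to\infty}D_{n,i}/D_n=\dfrac{t^i}{z^{2i+1}}\cdot\dfrac{\mu_3^i-\mu_2^i}{\mu_3-\mu_2}$ (coefficientwise as formal power series in $z$).
   Context: $\tau_i=\tau_i(z)$ are defined by $\sum_{i\ge0}\tau_iw^i=\frac{w}{1-2w+w^2-z^3w^3}$. $t$ is the power series in $z$ with $z^3=t(1-t)^2$, $t=z^3+O(z^6)$. $\mu_2,\mu_3$ are the roots of $X^2-(2-t)X+(1-t)^2$, so $\mu_2+\mu_3=2-t$, $\mu_2\mu_3=(1-t)^2$. For $h\ge1$, $D_h$ is the determinant of the $h\times h$ matrix $T_h$ (indices $0,\dots,h-1$) with $(T_h)_{p,p}=1$, $(T_h)_{p,p+1}=-2z$, $(T_h)_{p,p+2}=z^2$, $(T_h)_{p+1,p}=-z^2$, other entries $0$; $D_0=1$. $D_{n,i}$ is the determinant of $T_n^{\mathsf T}$ with its $i$-th column (columns numbered $1,\dots,n$) replaced by $(1,0,\dots,0)^{\mathsf T}$. *)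

From HB Require Import structures.
From mathcomp Require Import all_boot all_order all_algebra.
From mathcomp Require Import boolp.

Set Implicit Arguments.
Unset Strict Implicit.
Unset Printing Implicit Defensive.

Import Order.TTheory GRing.Theory.
Local Open Scope ring_scope.

Section FPS.
Variable R : comNzRingType.

Inductive fps : Type := FPS of nat -> R.
Definition coefs (f : fps) : nat -> R := let: FPS g := f in g.

HB.instance Definition _ := gen_eqMixin fps.
HB.instance Definition _ := gen_choiceMixin fps.

Lemma fpsP (f g : fps) : (forall k, coefs f k = coefs g k) -> f = g.
Proof. by case: f; case: g => g f /= H; congr FPS; apply: funext. Qed.

Definition fps0 : fps := FPS (fun _ => 0).
Definition fps_opp (f : fps) : fps := FPS (fun k => - coefs f k).
Definition fps_add (f g : fps) : fps := FPS (fun k => coefs f k + coefs g k).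

Fact fps_addA : associative fps_add.
Proof. by move=> f g h; apply: fpsP => k /=; rewrite addrA. Qed.
Fact fps_addC : commutative fps_add.
Proof. by move=> f g; apply: fpsP => k /=; rewrite addrC. Qed.
Fact fps_add0 : left_id fps0 fps_add.
Proof. by move=> f; apply: fpsP => k /=; rewrite add0r. Qed.
Fact fps_addN : left_inverse fps0 fps_opp fps_add.
Proof. by move=> f; apply: fpsP => k /=; rewrite addNr. Qed.

HB.instance Definition _ :=
  GRing.isZmodule.Build fps fps_addA fps_addC fps_add0 fps_addN.

Definition fps1 : fps := FPS (fun k => (k == 0)%:R).
Definition fps_mul (f g : fps) : fps :=
  FPS (fun k => \sum_(j < k.+1) coefs f j * coefs g (k - j)).

Lemma fps_mulE f g k :
  coefs (fps_mul f g) k = \sum_(j < k.+1) coefs f j * coefs g (k - j).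
Proof. by []. Qed.

Lemma fps_mul_rev f g k :
  coefs (fps_mul f g) k = \sum_(j < k.+1) coefs f (k - j) * coefs g j.
Proof.
rewrite /= (reindex_inj rev_ord_inj) /=.
by apply: eq_bigr => j _; rewrite (sub_ordK j).
Qed.

Fact fps_mulA : associative fps_mul.
Proof.
move=> p q r; apply: fpsP => i; rewrite fps_mulE [RHS]fps_mul_rev.
pose coef3 j k := coefs p j * (coefs q (i - j - k) * coefs r k).
transitivity (\sum_(j < i.+1) \sum_(k < i.+1 | (k <= i - j)%N) coef3 j k).
  apply: eq_bigr => j _; rewrite fps_mul_rev big_distrr /=.
  by rewrite (big_ord_narrow_leq (leq_subr _ _)).
rewrite (exchange_big_dep predT) //=; apply: eq_bigr => k _.
transitivity (\sum_(j < i.+1 | (j <= i - k)%N) coef3 j k).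
  apply: eq_bigl => j; rewrite -ltnS -(ltnS j) -!subSn ?leq_ord //.
  by rewrite -subn_gt0 -(subn_gt0 j) -!subnDA addnC.
rewrite (big_ord_narrow_leq (leq_subr _ _)) big_distrl /=.
by apply: eq_bigr => j _; rewrite /coef3 -!subnDA addnC mulrA.
Qed.

Fact fps_mulC : commutative fps_mul.
Proof.
move=> f g; apply: fpsP => k; rewrite fps_mul_rev /=.
by apply: eq_bigr => j _; rewrite mulrC.
Qed.

Fact fps_mul1 : left_id fps1 fps_mul.
Proof.
move=> f; apply: fpsP => k /=; rewrite big_ord_recl /= mul1r subn0 big1 ?addr0 //.
by move=> j _; rewrite mul0r.
Qed.

Fact fps_mulDl : left_distributive fps_mul fps_add.
Proof.
move=> f g h; apply: fpsP => k /=; rewrite -big_split /=.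
by apply: eq_bigr => j _; rewrite mulrDl.
Qed.

Fact fps1_neq0 : fps1 != fps0.
Proof.
apply/eqP => /(congr1 (fun f => coefs f 0)) /= /eqP; by rewrite oner_eq0.
Qed.

HB.instance Definition _ :=
  GRing.Zmodule_isComNzRing.Build fps fps_mulA fps_mulC fps_mul1 fps_mulDl
    fps1_neq0.

Definition fpsX : fps := FPS (fun k => (k == 1)%:R).
Definition fpsC (a : R) : fps := FPS (fun k => if k == 0 then a else 0).

(* Multiplicative inverse of a series whose constant coefficient is 1:     *)
Fixpoint inv1_seq (f : nat -> R) (n : nat) : seq R :=
  match n with
  | 0 => [:: 1]
  | m.+1 => let s := inv1_seq f m in
            rcons s (- \sum_(j < m.+1) f j.+1 * nth 0 s (m - j))
  end.
Definition inv1 (f : fps) : fps := FPS (fun k => nth 0 (inv1_seq (coefs f) k) k).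

Definition fdivX (m : nat) (f : fps) : fps := FPS (fun k => coefs f (k + m)).

End FPS.

Notation fz := (fpsX rat).
Notation fw := (fpsX (fps rat)).
Notation cz := (@fpsC (fps rat)).

Definition tauGF : fps (fps rat) :=
  fw * inv1 (1 - 2%:R * fw + fw ^+ 2 - cz (fz ^+ 3) * fw ^+ 3).
Definition tau (i : nat) : fps rat := coefs tauGF i.
Definition tau_prev (i : nat) : fps rat := if i is j.+1 then tau j else 0.

Definition Tmat (h : nat) : 'M[fps rat]_h :=
  \matrix_(p < h, q < h)
    if q == p :> nat then 1
    else if q == p.+1 :> nat then - (2%:R * fz)
    else if q == p.+2 :> nat then fz ^+ 2
    else if p == q.+1 :> nat then - fz ^+ 2
    else 0.

Definition Dn (h : nat) : fps rat := \det (Tmat h).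

(* D_{n,i}: det of T_n^T with its i-th column (columns numbered 1..n)
   replaced by (1,0,...,0)^T *)
Definition Dni (n i : nat) : fps rat :=
  \det (\matrix_(p < n, q < n)
          if q.+1 == i then (p == 0 :> nat)%:R else (Tmat n)^T p q).

From HB Require Import structures.
From mathcomp Require Import all_boot all_order all_algebra.
From mathcomp Require Import ring zify.
Import GRing.Theory.
Local Open Scope ring_scope.

(* Writing P(w) = 1 - 2w + w^2 - z^3 w^3 for the
      denominator of sum tau_i w^i, the hypothesis z^3 = t(1-t)^2 gives the
      factorisation P(w) = (1 - t w) Q(w) with Q(w) = 1 - (2-t) w + (1-t)^2 w^2.
      Hence sigma_i := tau_i - t tau_(i-1) has generating function
      w(1 - tw)/P(w) = w/Q(w), i.e. sigma_0 = 0, sigma_1 = 1 and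
      sigma_(m+2) = (2-t) sigma_(m+1) - (1-t)^2 sigma_m.
   2. Binet.  In any field, such a sequence equals (mu3^i - mu2^i)/(mu3 - mu2)
      where mu2, mu3 are the roots of X^2 - (2-t) X + (1-t)^2.
   3. Determinants.  Since t = z^3 s with s (1-t)^2 = 1, the rescaled sequence
      Y_q := z^q s^(q+1) sigma_(q+1) satisfies Y T_n = e_0 + z^2 Y_n e_(n-1)
      (row vector times the matrix T_n).  Multiplying by adj(T_n) shows that the
      first row of adj(T_n)/D_n (which is D_(n,.)/D_n by Cramer's rule) differs
      from Y by O(z^(n+2)); so D_(n,i)/D_n -> L := Y_(i-1) coefficientwise,
      and z^(2i+1) L = t^i sigma_i. *)

Set Implicit Arguments.
Unset Strict Implicit.

Section FpsCoefficients.
Variable R : comNzRingType.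
Implicit Types (f g : fps R) (a b : R).

Lemma coefsD f g k : coefs (f + g) k = coefs f k + coefs g k. Proof. by []. Qed.
Lemma coefsB f g k : coefs (f - g) k = coefs f k - coefs g k. Proof. by []. Qed.
Lemma coefs1 k : coefs (1 : fps R) k = (k == 0)%:R. Proof. by []. Qed.
Lemma coefsM f g k :
  coefs (f * g) k = \sum_(j < k.+1) coefs f j * coefs g (k - j).
Proof. by []. Qed.

Lemma coefsMn f n k : coefs (f *+ n) k = coefs f k *+ n.
Proof. by elim: n => [|n IH] //; rewrite !mulrS coefsD IH. Qed.

Lemma coefsXM f k :
  coefs (fpsX R * f) k = if k is k'.+1 then coefs f k' else 0.
Proof.
rewrite coefsM big_ord_recl /= mul0r add0r; case: k => [|k].
  by rewrite big_ord0.
rewrite big_ord_recl /= mul1r subn1 /= big1 ?addr0 // => j _.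
by rewrite /bump /= mul0r.
Qed.

Lemma coefsXnM m f k :
  coefs (fpsX R ^+ m * f) k = if (k < m)%N then 0 else coefs f (k - m).
Proof.
elim: m k => [|m IH] k; first by rewrite expr0 mul1r subn0.
by rewrite exprS -mulrA coefsXM; case: k.
Qed.

Lemma coefsCM a f k : coefs (fpsC a * f) k = a * coefs f k.
Proof.
rewrite coefsM big_ord_recl /= subn0 big1 ?addr0 // => j _.
by rewrite mul0r.
Qed.

Lemma Xn_inj m f g : fpsX R ^+ m * f = fpsX R ^+ m * g -> f = g.
Proof.
move=> H; apply: fpsP => k; have := congr1 (fun h => coefs h (k + m)) H.
by rewrite !coefsXnM ltnNge leq_addl /= addnK.
Qed.

Fact fpsC_zmod : zmod_morphism (@fpsC R).
Proof. by move=> a b; apply: fpsP => k /=; case: (k == 0)%N; rewrite ?subr0. Qed.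

Fact fpsC_monoid : monoid_morphism (@fpsC R).
Proof.
split; first by apply: fpsP => k /=; case: (k == 0)%N.
move=> a b; apply: fpsP => k; rewrite coefsCM /=.
by case: (k == 0)%N; rewrite ?mulr0.
Qed.

HB.instance Definition _ :=
  GRing.isZmodMorphism.Build R (fps R) (@fpsC R) fpsC_zmod.
HB.instance Definition _ :=
  GRing.isMonoidMorphism.Build R (fps R) (@fpsC R) fpsC_monoid.

Definition coef0 (f : fps R) : R := coefs f 0.

Fact coef0_zmod : zmod_morphism coef0. Proof. by []. Qed.
Fact coef0_monoid : monoid_morphism coef0.
Proof. by split=> // f g; rewrite /coef0 coefsM big_ord1. Qed.

HB.instance Definition _ :=
  GRing.isZmodMorphism.Build (fps R) R coef0 coef0_zmod.
HB.instance Definition _ :=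
  GRing.isMonoidMorphism.Build (fps R) R coef0 coef0_monoid.

Lemma size_inv1_seq (F : nat -> R) m : size (inv1_seq F m) = m.+1.
Proof. by elim: m => [|m IH] //=; rewrite size_rcons IH. Qed.

Lemma nth_inv1_seq (F : nat -> R) m l : (l <= m)%N ->
  nth 0 (inv1_seq F m) l = nth 0 (inv1_seq F l) l.
Proof.
elim: m => [|m IH]; first by rewrite leqn0 => /eqP ->.
rewrite leq_eqVlt => /orP [/eqP -> //|Hl].
by rewrite /= nth_rcons size_inv1_seq Hl IH.
Qed.

Lemma coefs_inv1S f m : coefs (inv1 f) m.+1 =
  - \sum_(j < m.+1) coefs f j.+1 * coefs (inv1 f) (m - j).
Proof.
rewrite /= nth_rcons size_inv1_seq ltnn eqxx; congr (- _).
by apply: eq_bigr => j _; rewrite nth_inv1_seq // leq_subr.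
Qed.

Lemma inv1P f : coef0 f = 1 -> f * inv1 f = 1.
Proof.
move=> f0; apply: fpsP => k; rewrite coefsM coefs1; case: k => [|m].
  by rewrite big_ord1 -[coefs f 0]/(coef0 f) f0 mul1r.
rewrite big_ord_recl -[coefs f 0]/(coef0 f) f0 mul1r subn0 coefs_inv1S.
by rewrite [X in _ + X](eq_bigr (fun j : 'I_m.+1 =>
  coefs f j.+1 * coefs (inv1 f) (m - j))) ?addNr.
Qed.

End FpsCoefficients.

Definition Pw : fps (fps rat) := 1 - 2%:R * fw + fw ^+ 2 - cz (fz ^+ 3) * fw ^+ 3.

Lemma coefs_mulPw F k : coefs (F * Pw) k =
  coefs F k - coefs (fw * F) k *+ 2 + coefs (fw * (fw * F)) k
  - fz ^+ 3 * coefs (fw * (fw * (fw * F))) k.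
Proof.
have -> : F * Pw = F - (fw * F) *+ 2 + fw * (fw * F)
                   - cz (fz ^+ 3) * (fw * (fw * (fw * F))) by rewrite /Pw; ring.
by rewrite !(coefsB, coefsD, coefsMn, coefsCM).
Qed.

Lemma Pw_coef0 : coef0 Pw = 1.
Proof.
by rewrite /coef0 -[Pw]mul1r coefs_mulPw !coefsXM mulr0 mul0rn addr0 !subr0.
Qed.

Lemma Pw_solution_rec (F : fps (fps rat)) : F * Pw = fw ->
  [/\ coefs F 0 = 0, coefs F 1 = 1 & forall m, coefs F m.+2 - coefs F m.+1 *+ 2
     + coefs F m - fz ^+ 3 * (if m is m'.+1 then coefs F m' else 0) = 0].
Proof.
move=> H; have E k : coefs (F * Pw) k = coefs fw k by rewrite H.
have F0 : coefs F 0 = 0.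
  by move: (E 0%N); rewrite coefs_mulPw !coefsXM !(mul0rn, mulr0, subr0, addr0).
split => //; first by move: (E 1%N); rewrite coefs_mulPw !coefsXM F0
  !(mul0rn, mulr0, subr0, addr0).
by move=> m; move: (E m.+2); rewrite coefs_mulPw !coefsXM.
Qed.

Lemma tau_rec : [/\ tau 0 = 0, tau 1 = 1 &
  forall m, tau m.+2 - tau m.+1 *+ 2 + tau m - fz ^+ 3 * tau_prev m = 0].
Proof.
apply: Pw_solution_rec.
by rewrite /tauGF -mulrA [_ * Pw]mulrC inv1P ?mulr1 // Pw_coef0.
Qed.

Lemma binet (K : fieldType) (p q mu2 mu3 : K) (a : nat -> K) :
  a 0 = 0 -> a 1 = 1 -> (forall m, a m.+2 = p * a m.+1 - q * a m) ->
  mu2 + mu3 = p -> mu2 * mu3 = q -> mu3 != mu2 ->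
  forall i, a i = (mu3 ^+ i - mu2 ^+ i) / (mu3 - mu2).
Proof.
move=> a0 a1 arec hp hq hne; have hd : mu3 - mu2 != 0 by rewrite subr_eq0.
suff H i : a i = (mu3 ^+ i - mu2 ^+ i) / (mu3 - mu2) /\
           a i.+1 = (mu3 ^+ i.+1 - mu2 ^+ i.+1) / (mu3 - mu2).
  by move=> i; case: (H i).
elim: i => [|i [IH1 IH2]]; first by rewrite a0 a1 !expr0 subrr mul0r divff.
by split => //; rewrite arec -hp -hq IH1 IH2 !exprS; field.
Qed.

Section SigmaSequence.
Variable t : fps rat.
Hypothesis ht : fz ^+ 3 = t * (1 - t) ^+ 2.

Definition sigma (i : nat) : fps rat := tau i - t * tau_prev i.

Definition Qw : fps (fps rat) :=
  1 - cz (2%:R - t) * fw + cz ((1 - t) ^+ 2) * fw ^+ 2.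

Lemma Pw_factor : Pw = (1 - cz t * fw) * Qw.
Proof.
by rewrite /Pw /Qw ht !(rmorphM, rmorphXn, rmorphB, rmorph1, rmorph_nat); ring.
Qed.

Lemma Qw_coef0 : coef0 Qw = 1.
Proof.
rewrite /coef0 /Qw coefsD coefsB !coefsCM -[fw ^+ 2]mulr1 coefsXnM /=.
by rewrite !mulr0 subr0 addr0.
Qed.

Lemma sigma_GF_P : FPS sigma = fw * (1 - cz t * fw) * inv1 Pw.
Proof.
have -> : fw * (1 - cz t * fw) * inv1 Pw = tauGF - cz t * (fw * tauGF).
  by rewrite /tauGF; ring.
by apply: fpsP => k; rewrite coefsB coefsCM [coefs (fw * tauGF) _]coefsXM; case: k.
Qed.

Lemma sigma_GF_Q : FPS sigma = fw * inv1 Qw.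
Proof.
rewrite sigma_GF_P.
transitivity (fw * (1 - cz t * fw) * inv1 Pw * (Qw * inv1 Qw)).
  by rewrite inv1P ?mulr1 // Qw_coef0.
transitivity (fw * inv1 Qw * ((1 - cz t * fw) * Qw * inv1 Pw)); first ring.
by rewrite -Pw_factor inv1P ?mulr1 // Pw_coef0.
Qed.

Lemma sigma_rec : [/\ sigma 0 = 0, sigma 1 = 1 &
  forall m, sigma m.+2 = (2%:R - t) * sigma m.+1 - (1 - t) ^+ 2 * sigma m].
Proof.
have [tau0 tau1 taurec] := tau_rec.
rewrite /sigma /= tau0 tau1 mulr0 !subr0; split => // m.
by apply/eqP; rewrite -subr_eq0 -(taurec m) ht /=; apply/eqP; ring.
Qed.

Lemma sigma_binet (K : fieldType) (phi : {rmorphism fps rat -> K}) (mu2 mu3 : K) :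
  mu2 + mu3 = phi (2%:R - t) -> mu2 * mu3 = phi ((1 - t) ^+ 2) -> mu3 != mu2 ->
  forall i, phi (sigma i) = (mu3 ^+ i - mu2 ^+ i) / (mu3 - mu2).
Proof.
have [s0 s1 srec] := sigma_rec.
apply: (binet (a := fun i => phi (sigma i))); rewrite ?s0 ?s1 ?rmorph0 ?rmorph1 //.
by move=> m; rewrite srec rmorphB !rmorphM.
Qed.

(* Since t = z^3 + O(z^6), t = z^3 s where s is the inverse of (1 - t)^2. *)
Lemma t_factor : (forall k, (k < 6)%N -> coefs t k = (k == 3%N)%:R) ->
  exists s, t = fz ^+ 3 * s /\ s * (1 - t) ^+ 2 = 1.
Proof.
move=> ht6; exists (fdivX 3 t).
have hts : t = fz ^+ 3 * fdivX 3 t.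
  apply: fpsP => k; rewrite coefsXnM; case: ltnP => hk; last by rewrite /= subnK.
  by rewrite ht6; [case: k hk => [|[|[|]]] | lia].
split => //; apply: (@Xn_inj _ 3).
by rewrite mulr1 mulrA -hts.
Qed.

End SigmaSequence.

(* The column relations of T_n: Trel z Y says that the row vector Y satisfies
   Y T_n = e_0 + z^2 Y_n e_(n-1) for every n (see row_mul_T below). *)
Definition Trel (R : comNzRingType) (z : R) (Y : nat -> R) : Prop :=
  [/\ Y 0 - z ^+ 2 * Y 1 = 1,
      Y 1 - 2%:R * z * Y 0 - z ^+ 2 * Y 2 = 0 &
      forall m, Y m.+2 - 2%:R * z * Y m.+1 + z ^+ 2 * Y m - z ^+ 2 * Y m.+3 = 0].

Definition rescaled (R : comNzRingType) (z s : R) (a : nat -> R) (q : nat) : R :=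
  z ^+ q * s ^+ q.+1 * a q.+1.

Lemma rescaled_Trel (R : comNzRingType) (z s t : R) (a : nat -> R) :
  a 0 = 0 -> a 1 = 1 ->
  (forall m, a m.+2 = (2%:R - t) * a m.+1 - (1 - t) ^+ 2 * a m) ->
  t = z ^+ 3 * s -> s * (1 - t) ^+ 2 = 1 ->
  Trel z (rescaled z s a).
Proof.
move=> a0 a1 arec hts hs; rewrite /rescaled; split.
- rewrite (arec 0) a1 a0; transitivity (s * (1 - t) ^+ 2); last exact: hs.
  by rewrite hts; ring.
- rewrite (arec 1) (arec 0) a1 a0.
  transitivity (2%:R * z * s * (s * (1 - t) ^+ 2 - 1)); last first.
    by rewrite hs subrr mulr0.
  by rewrite hts; ring.
- move=> m; rewrite (arec m.+2) (arec m.+1).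
  transitivity (z ^+ m * z ^+ 2 * s ^+ m * s * (s * (1 - t) ^+ 2 - 1) *
    (2%:R * s * a m.+2 - a m.+1 * (s * (1 - t) ^+ 2 + 1))); last first.
    by rewrite hs subrr mulr0 mul0r.
  by rewrite hts !exprS; ring.
Qed.

Section BandMatrix.
Variables (R : comNzRingType) (z : R).

Definition Tent (p q : nat) : R :=
  if q == p then 1
  else if q == p.+1 then - (2%:R * z)
  else if q == p.+2 then z ^+ 2
  else if p == q.+1 then - z ^+ 2
  else 0.

Lemma TentE p q : Tent p q = (q == p)%:R - 2%:R * z * (q == p.+1)%:R
  + z ^+ 2 * (q == p.+2)%:R - z ^+ 2 * (q.+1 == p)%:R.
Proof.
rewrite /Tent.
case: (q =P p) => h1; case: (q =P p.+1) => h2; case: (q =P p.+2) => h3;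
  case: (p =P q.+1) => h4; case: (q.+1 =P p) => h5; try (exfalso; lia);
  by rewrite /= ?mulr0 ?mulr1 ?subr0 ?addr0 ?sub0r ?add0r.
Qed.

Lemma sum_shift_indicator (F : nat -> R) (n c q : nat) :
  \sum_(p < n) F p * (q == p + c)%N%:R = ((c <= q) && (q - c < n))%N%:R * F (q - c)%N.
Proof.
elim: n => [|n IH]; first by rewrite big_ord0 /= andbF mul0r.
rewrite big_ord_recr /= IH.
have [->|ne] := eqVneq q (n + c)%N.
  by rewrite addnK leq_addl ltnn ltnSn /= mul0r add0r mulr1 mul1r.
rewrite mulr0 addr0.
have -> // : (((c <= q) && (q - c < n.+1)) = ((c <= q) && (q - c < n)))%N.
by apply/idP/idP => /andP [h1 h2]; apply/andP; split => //; lia.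
Qed.

Lemma row_mul_Tent (Y : nat -> R) (n q : nat) : (q < n)%N ->
  \sum_(p < n) Y p * Tent p q =
  Y q - 2%:R * z * ((1 <= q)%N%:R * Y q.-1) + z ^+ 2 * ((2 <= q)%N%:R * Y (q - 2)%N)
  - z ^+ 2 * ((q.+1 < n)%N%:R * Y q.+1).
Proof.
move=> qn.
have E p : Y p * Tent p q = Y p * (q == p + 0)%N%:R
   - 2%:R * z * (Y p * (q == p + 1)%N%:R) + z ^+ 2 * (Y p * (q == p + 2)%N%:R)
   - z ^+ 2 * (Y p * (q.+1 == p + 0)%N%:R).
  by rewrite TentE addn0 addn1 addn2; ring.
under eq_bigr => p _ do rewrite E.
rewrite !(sumrB, big_split) /= -!mulr_sumr !sum_shift_indicator.
rewrite !subn0 !leq0n qn /= mul1r subn1.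
have -> : (q.-1 < n)%N by lia.
have -> : (q - 2 < n)%N by lia.
by rewrite !andbT.
Qed.

Lemma row_mul_T (Y : nat -> R) (n q : nat) : (q < n)%N -> Trel z Y ->
  \sum_(p < n) Y p * Tent p q = (q == 0)%N%:R + (q.+1 == n)%N%:R * (z ^+ 2 * Y n).
Proof.
move=> qn [E0 E1 Em]; rewrite row_mul_Tent //.
have E0' : Y 0 - z ^+ 2 * Y 1 - 1 = 0 by rewrite E0 subrr.
have [e|ne] := eqVneq q.+1 n.
  rewrite -e ltnn.
  case: {qn e} q => [|[|m]] /=; apply/eqP; rewrite -subr_eq0; apply/eqP.
  - by rewrite -E0'; ring.
  - by rewrite -E1; ring.
  - by rewrite -(Em m) subn2 /=; ring.
have -> : (q.+1 < n)%N by lia.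
case: {qn ne} q => [|[|m]] /=; apply/eqP; rewrite -subr_eq0; apply/eqP.
- by rewrite -E0'; ring.
- by rewrite -E1; ring.
- by rewrite -(Em m) subn2 /=; ring.
Qed.

End BandMatrix.

Lemma TmatE n (p q : 'I_n) : Tmat n p q = Tent fz p q.
Proof. by rewrite mxE. Qed.

(* T_n is the identity modulo z, so D_n is invertible in Q[[z]]. *)
Lemma coef0_Tent p q : coef0 (Tent fz p q) = (q == p)%:R.
Proof.
rewrite TentE !rmorphD !rmorphN !rmorphM !rmorph_nat /=.
by rewrite !mulr0 !mul0r !subr0.
Qed.

Lemma Dn_inv n : Dn n * inv1 (Dn n) = 1.
Proof.
apply: inv1P; rewrite /Dn -det_map_mx.
have -> : map_mx (@coef0 rat) (Tmat n) = 1%:M.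
  by apply/matrixP => p q; rewrite !mxE coef0_Tent eq_sym.
by rewrite det1.
Qed.

Lemma Dni_adj n i (j : 'I_n.+1) : (1 <= i)%N -> nat_of_ord j = i.-1 ->
  Dni n.+1 i = \adj (Tmat n.+1) ord0 j.
Proof.
move=> i1 ej; rewrite /Dni (expand_det_col _ j) big_ord_recl.
rewrite big1 ?addr0; last first.
  by move=> p _; rewrite mxE /= ej prednK // eqxx mul0r.
rewrite mxE /= ej prednK // eqxx mul1r [RHS]mxE -cofactor_tr.
rewrite /cofactor; congr (_ * \det _).
apply/matrixP => p q; rewrite !mxE.
have : lift j p != j :> nat by rewrite (inj_eq val_inj) eq_sym neq_lift.
rewrite ej => h.
have -> // : ((lift j p).+1 == i) = false.
by apply/negbTE; move: h; apply: contra => /eqP <-.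
Qed.

(* Multiplying Y T_n = e_0 + z^2 Y_n e_(n-1) by adj(T_n) compares the first
   row of adj(T_n) with D_n Y, up to a multiple of Y_n. *)
Lemma adj_row0_defect n (Y : nat -> fps rat) (j : 'I_n.+1) : Trel fz Y ->
  \adj (Tmat n.+1) ord0 j =
  Dn n.+1 * Y j - fz ^+ 2 * Y n.+1 * \adj (Tmat n.+1) ord_max j.
Proof.
move=> HY; set T := Tmat n.+1; set A := \adj T; set D := Dn n.+1.
have adjT (q : 'I_n.+1) : \sum_p A ord0 p * T p q = D * (q == ord0)%:R.
  have := congr1 (fun M : 'M[fps rat]_n.+1 => M ord0 q) (mul_adj_mx T).
  by rewrite !mxE => ->; rewrite mulr_natr eq_sym.
pose ev := \row_p (D * Y p - A ord0 p).
have evT : ev *m T = \row_q (D * ((q.+1 == n.+1)%N%:R * (fz ^+ 2 * Y n.+1))).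
  apply/rowP => q; rewrite !mxE.
  under eq_bigr => p _ do rewrite mxE mulrBl -mulrA.
  rewrite sumrB -mulr_sumr adjT.
  under eq_bigr => p _ do rewrite /T TmatE.
  by rewrite row_mul_T //; have -> : (q == ord0) = (q == 0%N :> nat) by []; ring.
have := congr1 (fun M : 'M[fps rat]_(1, n.+1) => M ord0 j) (mulmxA ev T A).
rewrite mul_mx_adj mul_mx_scalar evT !mxE big_ord_recr /= big1; last first.
  move=> q _; rewrite mxE eqSS /= ltn_eqF //.
  by rewrite mul0r mulr0 mul0r.
rewrite add0r mxE eqxx mul1r /A mxE -/(Dn n.+1) -/D => H.
have H' : D * (D * Y j - cofactor T j ord0) =
          D * (fz ^+ 2 * Y n.+1 * cofactor T j ord_max) by rewrite H; ring.
have cancelD : forall f g, D * f = D * g -> f = g.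
  move=> f g e; rewrite -[f]mul1r -[g]mul1r -(Dn_inv n.+1) -/D.
  by rewrite ![D * inv1 D]mulrC -!mulrA e.
by move/cancelD: H' => <-; ring.
Qed.

(* If z^3 divides t, the roots of X^2 - (2-t) X + (1-t)^2 are distinct only
   where z does not vanish: at z = 0 the discriminant t (4 - 3t) vanishes. *)
Lemma root_image_neq0 (R : comNzRingType) (K : fieldType)
    (phi : {rmorphism R -> K}) (z s t : R) (mu2 mu3 : K) :
  t = z ^+ 3 * s -> mu2 + mu3 = phi (2%:R - t) ->
  mu2 * mu3 = phi ((1 - t) ^+ 2) -> mu3 != mu2 -> phi z != 0.
Proof.
move=> hts h1 h2 hne; apply: contraNneq hne => z0.
have t0 : phi t = 0 by rewrite hts rmorphM rmorphXn z0 expr0n mul0r.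
have : (mu3 - mu2) ^+ 2 = 0.
  transitivity ((mu2 + mu3) ^+ 2 - 4%:R * (mu2 * mu3)); first ring.
  by rewrite h1 h2 rmorphXn !rmorphB rmorph1 rmorph_nat t0; ring.
by move/eqP; rewrite expf_eq0 /= subr_eq0.
Qed.

Lemma Dni_ratio_stable (Y W : nat -> fps rat) (i k n : nat) :
  Trel fz Y -> (forall m, Y m = fz ^+ m * W m) -> (1 <= i)%N -> (k + i <= n)%N ->
  coefs (Dni n i * inv1 (Dn n)) k = coefs (Y i.-1) k.
Proof.
move=> HY HW i1; case: n => [|n] hn; first by lia.
have ji : (i.-1 < n.+1)%N by lia.
rewrite (@Dni_adj n i (Ordinal ji)) // (adj_row0_defect _ HY).
change (nat_of_ord (Ordinal ji)) with i.-1.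
set A := \adj _ ord_max _; set D := Dn n.+1.
transitivity (coefs (Y i.-1 * (D * inv1 D)
                     - fz ^+ n.+3 * (W n.+1 * A * inv1 D)) k).
  by rewrite (HW n.+1) !exprS; congr (coefs _ k); ring.
rewrite Dn_inv mulr1 coefsB coefsXnM.
have -> : (k < n.+3)%N by lia.
by rewrite subr0.
Qed.

Theorem mainTheorem6
  (t : fps rat)
  (ht : fz ^+ 3 = t * (1 - t) ^+ 2)
  (ht6 : forall k : nat, (k < 6)%N -> coefs t k = (k == 3%N)%:R) :
  let G : fps (fps rat) := FPS (fun i => tau i - t * tau_prev i) in
  [/\
   G = fw * (1 - cz t * fw)
         * inv1 (1 - 2%:R * fw + fw ^+ 2 - cz (fz ^+ 3) * fw ^+ 3),
   G = fw * inv1 (1 - cz (2%:R - t) * fw + cz ((1 - t) ^+ 2) * fw ^+ 2),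
   (forall (i : nat) (K : fieldType) (phi : {rmorphism fps rat -> K})
           (mu2 mu3 : K),
      mu2 + mu3 = phi (2%:R - t) -> mu2 * mu3 = phi ((1 - t) ^+ 2) ->
      mu3 != mu2 ->
      phi (tau i - t * tau_prev i) = (mu3 ^+ i - mu2 ^+ i) / (mu3 - mu2))
   &
   (forall i : nat, (1 <= i)%N ->
      exists L : fps rat,
        [/\ forall k : nat, exists N : nat, forall n : nat, (N <= n)%N ->
              coefs (Dni n i * inv1 (Dn n)) k = coefs L k,
            fz ^+ (2 * i).+1 * L = t ^+ i * (tau i - t * tau_prev i)
          & forall (K : fieldType) (phi : {rmorphism fps rat -> K})
                   (mu2 mu3 : K),
              mu2 + mu3 = phi (2%:R - t) -> mu2 * mu3 = phi ((1 - t) ^+ 2) ->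
              mu3 != mu2 ->
              phi L = phi t ^+ i / phi fz ^+ (2 * i).+1
                      * ((mu3 ^+ i - mu2 ^+ i) / (mu3 - mu2))])].
Proof.
move=> G; split; [exact: sigma_GF_P | exact: sigma_GF_Q | |].
  by move=> i K phi mu2 mu3 h1 h2 hne; apply: sigma_binet.
move=> i i1; have [s [hts hs]] := t_factor ht ht6.
have [s0 s1 srec] := sigma_rec ht.
pose Y := rescaled fz s (sigma t).
have HY : Trel fz Y by apply: rescaled_Trel hts hs.
have HL : fz ^+ (2 * i).+1 * Y i.-1 = t ^+ i * sigma t i.
  rewrite /Y /rescaled prednK // hts exprMn -exprM.
  have -> : (3 * i = (2 * i).+1 + i.-1)%N by lia.
  by rewrite exprD; ring.
exists (Y i.-1); split=> //.
- move=> k; exists (k + i)%N => n hn.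
  by apply: (Dni_ratio_stable (W := fun m => s ^+ m.+1 * sigma t m.+1)) => // m;
    rewrite /Y /rescaled mulrA.
- move: (Y i.-1) HL => L HL K phi mu2 mu3 h1 h2 hne.
  have hz : phi fz ^+ (2 * i).+1 != 0.
    by rewrite expf_neq0 // (root_image_neq0 hts h1 h2 hne).
  move/(congr1 phi): HL; rewrite !rmorphM !rmorphXn (sigma_binet ht h1 h2 hne).
  move=> HL'; apply: (mulfI hz).
  by rewrite HL' [RHS]mulrA (mulrC _ (phi t ^+ i / _)) divfK.
Qed.
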